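(* Let $S=S(\lambda_1,\ldots,\lambda_d)$ be a spider with $n$ vertices and let $S_L$ be its line graph (which has $n-1$ vertices). If $S$ has a connected partition of type $\mu$ for every integer partition $\mu$ of $n$, then $S_L$ has a connected partition of type $\nu$ for every integer partition $\nu$ of $n-1$.
   Context: A spider $S(\lambda_1,\ldots,\lambda_d)$, for positive integers $\lambda_1,\ldots,\lambda_d$, is the tree consisting of a vertex $v$ (the center) together with $d$ vertex-disjoint paths (legs) having $\lambda_1,\ldots,\lambda_d$ vertices respectively, where $v$ is joined by an edge to one endpoint of each leg. The line graph of a graph has the edges of the graph as vertices, two being adjacent when they share an endpoint. A connected partition of a graph $G=(V,E)$ is a partition of $V$ into blocks each inducing a connected subgraph; its type is the integer partition of $|V|$ formed by the block sizes in decreasing order. *)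

From mathcomp Require Import all_boot.
Set Implicit Arguments. Unset Strict Implicit. Unset Printing Implicit Defensive.

(* A simple graph is given by a finite vertex type T and an adjacency relation
   e : rel T (symmetric and irreflexive for the graphs used below). *)

(* Spider S(lam_0,...,lam_{d-1}): vertices are the centre (None) and
   Some (i, k) = the k-th vertex (k = 0 is adjacent to the centre) of leg i,
   which has lam i vertices. *)
Definition spider_vertex (d : nat) (lam : 'I_d -> nat) : finType :=
  option {i : 'I_d & 'I_(lam i)}.

Definition spider_adj (d : nat) (lam : 'I_d -> nat) : rel (spider_vertex lam) :=
  fun x y =>
    match x, y with
    | None, None => false
    | None, Some v => val (tagged v) == 0
    | Some v, None => val (tagged v) == 0
    | Some u, Some v =>
        (tag u == tag v) &&
        (((val (tagged u)).+1 == val (tagged v)) ||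
         ((val (tagged v)).+1 == val (tagged u)))
    end.

Definition is_edge (T : finType) (e : rel T) (E : {set T}) : bool :=
  [exists x, exists y, e x y && (E == [set x; y])].

Definition line_vertex (T : finType) (e : rel T) : finType :=
  {E : {set T} | is_edge e E}.

Definition line_adj (T : finType) (e : rel T) : rel (line_vertex e) :=
  fun E F => (E != F) && (val E :&: val F != set0).

Definition induces_connected (T : finType) (e : rel T) (B : {set T}) : bool :=
  [forall x in B, forall y in B,
     connect (fun u v => [&& e u v, u \in B & v \in B]) x y].

Definition is_intpart (n : nat) (mu : seq nat) : bool :=
  [&& sorted geq mu, all (fun k => 0 < k) mu & sumn mu == n].

Definition has_connected_partition (T : finType) (e : rel T) (mu : seq nat) : Prop :=
  exists P : {set {set T}},
    [/\ partition P [set: T],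
        (forall B, B \in P -> induces_connected e B) &
        sort geq [seq #|B : {set T}| | B : {set T} in P] = mu].

From mathcomp Require Import all_boot zify.
Set Implicit Arguments. Unset Strict Implicit. Unset Printing Implicit Defensive.

(* Let nu be a partition of n - 1.  By hypothesis the spider S has
   a connected partition P of type nu + (1), so P has a singleton block [set r].
   Root S at r and send every vertex x <> r to the edge joining x to its
   neighbour on the path towards r (its "parent edge").  In a tree this is a
   bijection from the vertices other than r onto the edges, it maps each block
   B of P other than [set r] onto a set of #|B| line-graph vertices, and a path
   inside B is mapped to a walk inside the image, because parent edges of
   adjacent vertices share a vertex.  The images therefore form a connected
   partition of the line graph of type nu. *)

Lemma geq_total : total geq.
Proof. by move=> m n; rewrite /= leq_total. Qed.

Lemma geq_trans : transitive geq.
Proof. by move=> m n p /= hnm hpn; apply: leq_trans hpn hnm. Qed.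

Lemma geq_anti : antisymmetric geq.
Proof. by move=> m n /= h; apply/anti_leq; rewrite andbC. Qed.

Lemma perm_image_imset (T U : finType) (W : eqType) (f : T -> U) (g : U -> W)
    (A : {set T}) :
  {in A &, injective f} ->
  perm_eq [seq g y | y in f @: A] [seq g (f x) | x in A].
Proof.
move=> f_inj.
have -> : [seq g (f x) | x in A] = map g [seq f x | x in A] by rewrite -map_comp.
apply: perm_map.
apply: uniq_perm; rewrite ?enum_uniq ?map_inj_in_uniq ?enum_uniq //.
  by move=> x y; rewrite !mem_enum; apply: f_inj.
by move=> y; rewrite mem_enum; apply/imsetP/imageP.
Qed.

Lemma perm_image_setD1 (T : finType) (W : eqType) (g : T -> W) (A : {set T}) a :
  a \in A -> perm_eq [seq g x | x in A] (g a :: [seq g x | x in A :\ a]).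
Proof.
move=> aA; rewrite -map_cons; apply: perm_map.
apply: uniq_perm; rewrite /= ?enum_uniq ?mem_enum ?setD11 //.
by move=> x; rewrite !inE !mem_enum !inE; case: eqP => // ->.
Qed.

(* For a tree
   the map sending each vertex to its neighbour on the path to r is one. *)
Definition rooted_parent (T : finType) (e : rel T) (r : T) (par : T -> T) :=
  [/\ par r = r,
      forall x, x != r -> e x (par x),
      forall x y, e x y -> par x = y \/ par y = x &
      forall x, x != r -> par (par x) != x].

Section RootedLineGraph.
Variables (T : finType) (e : rel T) (r : T) (par : T -> T).
Hypotheses (e_irr : irreflexive e) (par_rooted : rooted_parent e r par).
Local Notation L := (line_vertex e).

Let par_adj x : x != r -> e x (par x).
Proof. by case: par_rooted => _ + _ _; apply. Qed.

Let adj_par x y : e x y -> par x = y \/ par y = x.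
Proof. by case: par_rooted => _ _ + _; apply. Qed.

Definition up_edge (x : T) : {set T} := [set x; par x].

Lemma up_edge_is_edge x : x != r -> is_edge e (up_edge x).
Proof.
by move=> xr; apply/existsP; exists x; apply/existsP; exists (par x); rewrite par_adj ?eqxx.
Qed.

Definition up_vertex x (xr : x != r) : L := Sub (up_edge x) (up_edge_is_edge xr).

Lemma up_edge_inj x y : x != r -> y != r -> up_edge x = up_edge y -> x = y.
Proof.
case: par_rooted => _ _ _ no2cycle xr yr exy.
have /set2P[//|xpy] : x \in up_edge y by rewrite -exy set21.
have /set2P[//|ypx] : y \in up_edge x by rewrite exy set21.
by move: (no2cycle y yr); rewrite -xpy -ypx eqxx.
Qed.

Lemma edge_is_up_edge E : is_edge e E -> exists2 x, x != r & E = up_edge x.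
Proof.
case: par_rooted => par_r _ _ _ /existsP[x /existsP[y /andP[exy /eqP ->]]].
case: (adj_par exy) => [pxy | pyx].
  exists x; last by rewrite /up_edge pxy.
  by apply: contraTneq exy => xr; rewrite -pxy xr par_r e_irr.
exists y; last by rewrite /up_edge pyx setUC.
by apply: contraTneq exy => yr; rewrite -pyx yr par_r e_irr.
Qed.

Lemma up_edge_meet x y : e x y -> up_edge x :&: up_edge y != set0.
Proof.
case/adj_par=> <-; apply/set0Pn; [exists (par x) | exists (par y)];
  by rewrite !inE !eqxx ?orbT.
Qed.

Definition edge_block (B : {set T}) : {set L} :=
  [set E : L | val E \in up_edge @: B].

Lemma edge_blockP (B : {set T}) (E : L) :
  reflect (exists2 x, x \in B & val E = up_edge x) (E \in edge_block B).
Proof. by rewrite inE; apply: (iffP imsetP). Qed.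

Lemma up_vertex_edge_block (B : {set T}) x (xr : x != r) :
  x \in B -> up_vertex xr \in edge_block B.
Proof. by move=> xB; apply/edge_blockP; exists x. Qed.

Section AvoidingRoot.
Variable B : {set T}.
Hypothesis rB : r \notin B.

Let neq_root x : x \in B -> x != r.
Proof. by apply: contraTneq => ->. Qed.

Lemma card_edge_block : #|edge_block B| = #|B|.
Proof.
rewrite -(card_imset _ val_inj) -(card_in_imset (f := up_edge)); last first.
  by move=> x y xB yB; apply: up_edge_inj; apply: neq_root.
congr #|pred_of_set _|; apply/setP => S.
apply/imsetP/imsetP => [[E /edge_blockP[x xB ->] ->] | [x xB ->]]; first by exists x.
by exists (up_vertex (neq_root xB)); first exact: up_vertex_edge_block.
Qed.

Lemma edge_block_meet (B' : {set T}) E : r \notin B' ->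
  E \in edge_block B -> E \in edge_block B' -> exists2 x, x \in B & x \in B'.
Proof.
move=> rB' /edge_blockP[x xB eE] /edge_blockP[y yB' eE'].
have yr : y != r by apply: contraTneq yB' => ->.
have exy : x = y by apply: up_edge_inj (neq_root xB) yr _; rewrite -eE -eE'.
by exists x; rewrite // exy.
Qed.

(* A path x_0 x_1 ... x_k inside B yields the walk of parent edges
   up_edge x_0, ..., up_edge x_k inside edge_block B, consecutive parent
   edges of adjacent vertices being distinct and intersecting. *)
Lemma edge_block_connected :
  induces_connected e B -> induces_connected (@line_adj _ e) (edge_block B).
Proof.
move=> /forall_inP B_conn; apply/forall_inP => E /edge_blockP[x xB eE].
apply/forall_inP => F /edge_blockP[y yB eF].
have /connectP[p] := forall_inP (B_conn x xB) y yB.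
elim: p x E xB eE => [|z p IHp] x E xB eE /=.
  move=> _ exy; have -> : E = F by apply: val_inj; rewrite eE eF exy.
  exact: connect0.
case/andP=> /and3P[exz _ zB] zp last_p.
have EB : E \in edge_block B by apply/edge_blockP; exists x.
pose E' := up_vertex (neq_root zB).
apply: connect_trans (IHp z E' zB erefl zp last_p); apply: connect1.
rewrite /line_adj EB up_vertex_edge_block //= eE up_edge_meet // !andbT.
apply: contraTneq exz => /(congr1 val); rewrite eE => /up_edge_inj-> //.
- by rewrite e_irr.
- exact: neq_root.
- exact: neq_root.
Qed.

End AvoidingRoot.

Section SingletonRootBlock.
Variable P : {set {set T}}.
Hypotheses (P_part : partition P [set: T]) (P_root : [set r] \in P).
Local Notation Q := (P :\ [set r]).

Lemma root_notin_block B : B \in Q -> r \notin B.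
Proof.
case/setD1P=> B_r BP; case/and3P: P_part => _ /trivIsetP P_triv _.
by rewrite (disjointFl (P_triv _ _ BP P_root B_r)) ?set11.
Qed.

Lemma block_nonempty B : B \in P -> exists x, x \in B.
Proof.
move=> BP; case/and3P: P_part => _ _ P0.
by case: (set_0Vmem B) => [B0 | [x xB]]; [move: P0; rewrite -B0 BP | exists x].
Qed.

Lemma block_eq B B' x : B \in P -> B' \in P -> x \in B -> x \in B' -> B = B'.
Proof.
move=> BP B'P xB xB'; apply/eqP; apply: contraT => BB'.
case/and3P: P_part => _ /trivIsetP P_triv _.
by rewrite (disjointFr (P_triv _ _ BP B'P BB') xB) in xB'.
Qed.

Let Q_sub_P B : B \in Q -> B \in P.
Proof. by case/setD1P. Qed.

Lemma edge_block_eq B B' E : B \in Q -> B' \in Q ->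
  E \in edge_block B -> E \in edge_block B' -> B = B'.
Proof.
move=> BQ B'Q EB EB'.
have [x xB xB'] := edge_block_meet (root_notin_block BQ) (root_notin_block B'Q) EB EB'.
exact: block_eq (Q_sub_P BQ) (Q_sub_P B'Q) xB xB'.
Qed.

Lemma edge_block_nonempty B : B \in Q -> exists E, E \in edge_block B.
Proof.
move=> BQ; have [x xB] := block_nonempty (Q_sub_P BQ).
have xr : x != r by apply: contraTneq xB => ->; apply: root_notin_block.
by exists (up_vertex xr); apply: up_vertex_edge_block.
Qed.

Lemma edge_block_inj : {in Q &, injective edge_block}.
Proof.
move=> B B' BQ B'Q eBB'; have [E EB] := edge_block_nonempty BQ.
by apply: (edge_block_eq BQ B'Q EB); rewrite -eBB'.
Qed.

Lemma edge_block_partition : partition (edge_block @: Q) [set: L].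
Proof.
apply/and3P; split.
- apply/eqP/setP => E; rewrite inE; apply/bigcupP.
  have [x xr eE] := edge_is_up_edge (valP E).
  case/and3P: P_part => /eqP P_cover _ _.
  have /bigcupP[B BP xB] : x \in cover P by rewrite P_cover inE.
  have BQ : B \in Q.
    by rewrite !inE BP andbT; apply: contraNneq xr => B_r; move: xB; rewrite B_r inE.
  by exists (edge_block B); [apply: imset_f | apply/edge_blockP; exists x].
- apply/trivIsetP => _ _ /imsetP[B BQ ->] /imsetP[B' B'Q ->] neq.
  apply/pred0P => E /=; apply/negbTE/andP => -[EB EB'].
  by move: neq; rewrite (edge_block_eq BQ B'Q EB EB') eqxx.
- apply/imsetP => -[B BQ B0]; have [E] := edge_block_nonempty BQ.
  by rewrite -B0 inE.
Qed.

Lemma edge_block_type :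
  perm_eq [seq #|C : {set L}| | C in edge_block @: Q] [seq #|B : {set T}| | B in Q].
Proof.
suff <- : [seq #|edge_block B| | B in Q] = [seq #|B : {set T}| | B in Q].
  exact: perm_image_imset edge_block_inj.
apply/eq_in_map => B; rewrite mem_enum => BQ.
exact: card_edge_block (root_notin_block BQ).
Qed.

Lemma line_partition_of_rooted (nu : seq nat) :
  (forall B, B \in P -> induces_connected e B) ->
  perm_eq [seq #|B : {set T}| | B : {set T} in P] (1 :: nu) -> sorted geq nu ->
  has_connected_partition (@line_adj _ e) nu.
Proof.
move=> P_conn P_type nu_sorted; exists (edge_block @: Q); split.
- exact: edge_block_partition.
- move=> _ /imsetP[B BQ ->].
  exact: edge_block_connected (root_notin_block BQ) (P_conn B (Q_sub_P BQ)).
- have Q_type : perm_eq [seq #|B : {set T}| | B in Q] nu.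
    rewrite -(perm_cons 1); apply: perm_trans P_type; rewrite perm_sym.
    by have := perm_image_setD1 (fun B : {set T} => #|B|) P_root; rewrite cards1.
  rewrite -(sorted_sort geq_trans nu_sorted).
  apply/(perm_sortP geq_total geq_trans geq_anti).
  exact: perm_trans edge_block_type Q_type.
Qed.

End SingletonRootBlock.

End RootedLineGraph.

(* Codes for the vertices of a spider with d legs: None is the centre and
   Some (i, m) the vertex at depth m (0 = next to the centre) on leg i. *)
Notation code d := (option ('I_d * nat)).

Section Codes.
Variable d : nat.

(* Adjacency of the spider with legs of unbounded length, read on codes. *)
Definition code_adj (c c' : code d) : bool :=
  match c, c' with
  | None, None => false
  | None, Some (_, m) | Some (_, m), None => m == 0
  | Some (i, m), Some (j, l) => (i == j) && ((m.+1 == l) || (l.+1 == m))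
  end.

(* The neighbour of c on the path from c to the root rc: on a leg not
   containing rc move towards the centre; on the leg of rc move towards rc;
   from the centre step onto the leg of rc. *)
Definition code_par (rc c : code d) : code d :=
  match rc, c with
  | None, None => None
  | Some (i0, _), None => Some (i0, 0)
  | None, Some (i, m) => if m == 0 then None else Some (i, m.-1)
  | Some (i0, k0), Some (i, m) =>
      if i != i0 then (if m == 0 then None else Some (i, m.-1))
      else if k0 < m then Some (i, m.-1)
      else if m < k0 then Some (i, m.+1) else Some (i, m)
  end.

(* Case analysis on all the conditionals of code_par, closing the arithmetic
   contradictions and identifying m with k0 when neither m < k0 nor k0 < m. *)
Ltac absurd_neq := match goal with H : is_true (?x != ?x) |- _ => by rewrite eqxx in H end.

Ltac case_code_par :=
  rewrite /=; repeat (case: ifP => ? /=); rewrite /= ?eqxx /=;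
  repeat match goal with
  | H : (_ != _) = false |- _ => move/negbFE/eqP: H => H; subst
  | H : (?a < ?b) = false, H' : (?b < ?a) = false |- _ =>
      have E : a = b by lia
  end; subst; rewrite ?eqxx ?orbT //=;
  try absurd_neq.

Lemma code_par_root rc : code_par rc rc = rc.
Proof. by case: rc => [[i0 k0]|] //=; rewrite eqxx ltnn. Qed.

Lemma code_par_adj rc c : c != rc -> code_adj c (code_par rc c).
Proof.
case: rc => [[i0 k0]|]; case: c => [[i m]|] //= hne; case_code_par.
all: try lia.
Qed.

Lemma code_adj_par rc c c' :
  code_adj c c' -> code_par rc c = c' \/ code_par rc c' = c.
Proof.
case: rc => [[i0 k0]|]; case: c => [[i m]|]; case: c' => [[j l]|] //=;
  try (case/andP=> /eqP <- /orP[] /eqP <-); try (move/eqP ->); case_code_par;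
  try (by left); try (by right); lia.
Qed.

Lemma code_par_no2cycle rc c : c != rc -> code_par rc (code_par rc c) != c.
Proof.
case: rc => [[i0 k0]|]; case: c => [[i m]|] //= hne; case_code_par.
all: try lia.
all: by apply/eqP => -[] *; subst; try lia; absurd_neq.
Qed.

Definition valid_code (lam : 'I_d -> nat) (c : code d) : bool :=
  if c is Some (i, m) then m < lam i else true.

Lemma code_par_valid lam rc c :
  valid_code lam rc -> valid_code lam c -> valid_code lam (code_par rc c).
Proof. by case: rc => [[i0 k0]|]; case: c => [[i m]|] //= h1 h2; case_code_par; lia. Qed.

End Codes.

Section SpiderParent.
Variables (d : nat) (lam : 'I_d -> nat).
Local Notation V := (spider_vertex lam).

Definition code_of (x : V) : code d :=
  if x is Some v then Some (tag v, val (tagged v)) else None.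

Definition vertex_of (c : code d) : V :=
  if c is Some (i, m) then
    if insub m is Some k then Some (@Tagged _ i (fun i => 'I_(lam i)) k) else None
  else None.

Lemma code_of_inj : injective code_of.
Proof. by case=> [[i k]|] [[j l]|] //= [] eij; subst j => /val_inj ->. Qed.

Lemma code_ofK c : valid_code lam c -> code_of (vertex_of c) = c.
Proof. by case: c => [[i m]|] //= mi; rewrite insubT. Qed.

Lemma valid_code_of x : valid_code lam (code_of x).
Proof. by case: x => [[i k]|] //=. Qed.

Lemma spider_adj_code x y : spider_adj x y = code_adj (code_of x) (code_of y).
Proof. by case: x => [[i k]|]; case: y => [[j l]|]. Qed.

Lemma spider_adj_irr : irreflexive (@spider_adj d lam).
Proof. by case=> [[i k]|] //=; rewrite eqxx /= (gtn_eqF (ltnSn k)). Qed.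

Definition spider_par (r x : V) : V := vertex_of (code_par (code_of r) (code_of x)).

Lemma code_of_par r x : code_of (spider_par r x) = code_par (code_of r) (code_of x).
Proof. by rewrite code_ofK // code_par_valid // valid_code_of. Qed.

Lemma spider_rooted_parent r : rooted_parent (@spider_adj d lam) r (spider_par r).
Proof.
have neq_code x : (x != r) = (code_of x != code_of r) by rewrite (inj_eq code_of_inj).
split.
- by apply: code_of_inj; rewrite code_of_par code_par_root.
- by move=> x; rewrite neq_code spider_adj_code code_of_par; apply: code_par_adj.
- move=> x y; rewrite spider_adj_code => /(code_adj_par (code_of r)).
  by case=> exy; [left | right]; apply: code_of_inj; rewrite code_of_par.
- move=> x; rewrite neq_code => /code_par_no2cycle; apply: contra_neq.
  by move=> /(congr1 code_of); rewrite !code_of_par.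
Qed.

End SpiderParent.

Lemma intpart_cons1 n nu :
  0 < n -> is_intpart (n - 1) nu -> is_intpart n (sort geq (1 :: nu)).
Proof.
move=> n_gt0 /and3P[_ nu_pos /eqP nu_sum]; apply/and3P; split.
- exact: sort_sorted geq_total _.
- by rewrite all_sort /= nu_pos.
- by rewrite (perm_sumn (permEl (perm_sort _ _))) /= nu_sum subnKC.
Qed.

Lemma singleton_block (T : finType) (P : {set {set T}}) :
  1 \in [seq #|B : {set T}| | B : {set T} in P] -> exists r, [set r] \in P.
Proof. by case/imageP=> B BP /esym/eqP/cards1P[r B_r]; exists r; rewrite -B_r. Qed.

Theorem proposition6p2 (d : nat) (lam : 'I_d -> nat) :
  (forall i, 0 < lam i) ->
  (forall mu, is_intpart #|@spider_vertex d lam| mu ->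
     has_connected_partition (@spider_adj d lam) mu) ->
  forall nu, is_intpart (#|@spider_vertex d lam| - 1) nu ->
     has_connected_partition (@line_adj _ (@spider_adj d lam)) nu.
Proof.
move=> _ spider_types nu nu_part.
have n_gt0 : 0 < #|spider_vertex lam| by rewrite card_option.
have [P [P_part P_conn P_type]] := spider_types _ (intpart_cons1 n_gt0 nu_part).
have P_perm : perm_eq [seq #|B : {set _}| | B : {set _} in P] (1 :: nu).
  exact/(perm_sortP geq_total geq_trans geq_anti).
have [r P_r] : exists r, [set r] \in P.
  by apply: singleton_block; rewrite (perm_mem P_perm) mem_head.
case/and3P: nu_part => nu_sorted _ _.
exact: (line_partition_of_rooted (@spider_adj_irr d lam) (spider_rooted_parent r)
  P_part P_r P_conn P_perm nu_sorted).
Qed.
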